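(* Consider the job set $J$ described in the context, with $p_\ell$ sufficiently large. Let $\sigma=(M_1,M_2)$ be a schedule of $J$ with $\omega_1(\sigma)=0$ and $\ell\in M_1$. Then $\sigma$ can be improved (its makespan strictly decreased) by the 3-swap that interchanges $a_1$ with $b_1,c_1$, making $\omega_1=1$.
   Context: Two identical machines; a schedule $\sigma=(M_1,M_2)$ partitions the jobs into sets processed on machines 1 and 2, with loads $L_i=\sum_{j\in M_i}p_j$ and makespan $\max_iL_i$. Fix $n\ge1$ and the job set $J=\{a_i,b_i,c_i:1\le i\le n\}\cup\{\ell\}$ with $p_{a_i}=2^{n+i+1}+2^{i-1}$, $p_{b_i}=2^{n+i}$, $p_{c_i}=2^{n+i-1}+2^{i-1}$, and $p_\ell$ a sufficiently large number. For each $i$ define $\omega_i(\sigma)=0$ if $a_i\in M_1$ and $b_i,c_i\in M_2$; $\omega_i(\sigma)=1$ if $a_i\in M_2$ and $b_i,c_i\in M_1$; and $\omega_i(\sigma)=-1$ otherwise. A 3-swap interchanges the machine assignments of exactly three jobs (some on each machine); it improves $\sigma$ if the makespan strictly decreases. *)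

From mathcomp Require Import all_boot all_algebra.
Set Implicit Arguments. Unset Strict Implicit. Unset Printing Implicit Defensive.

(* Jobs: a_i, b_i, c_i (i : 'I_n, paper index i+1) and the long job l. *)
Definition job (n : nat) : finType := ('I_n + 'I_n + 'I_n + unit)%type.
Definition ja {n} (i : 'I_n) : job n := inl (inl (inl i)).
Definition jb {n} (i : 'I_n) : job n := inl (inl (inr i)).
Definition jc {n} (i : 'I_n) : job n := inl (inr i).
Definition jl {n} : job n := inr tt.

Definition ptime (n pl : nat) (j : job n) : nat :=
  match j with
  | inl (inl (inl i)) => let k := (i : nat).+1 in 2 ^ (n + k + 1) + 2 ^ (k - 1)
  | inl (inl (inr i)) => let k := (i : nat).+1 in 2 ^ (n + k)
  | inl (inr i)       => let k := (i : nat).+1 in 2 ^ (n + k - 1) + 2 ^ (k - 1)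
  | inr _             => pl
  end.

(* A schedule assigns each job to machine 1 (true) or machine 2 (false). *)
Definition schedule (n : nat) := job n -> bool.

Definition onM1 {n} (s : schedule n) (j : job n) : bool := s j.
Definition onM2 {n} (s : schedule n) (j : job n) : bool := ~~ s j.

Definition load1 (n pl : nat) (s : schedule n) : nat :=
  \sum_(j : job n | onM1 s j) ptime pl j.
Definition load2 (n pl : nat) (s : schedule n) : nat :=
  \sum_(j : job n | onM2 s j) ptime pl j.
Definition makespan (n pl : nat) (s : schedule n) : nat :=
  maxn (load1 pl s) (load2 pl s).

Definition omega {n} (s : schedule n) (i : 'I_n) : int :=
  if [&& onM1 s (ja i), onM2 s (jb i) & onM2 s (jc i)] then Posz 0
  else if [&& onM2 s (ja i), onM1 s (jb i) & onM1 s (jc i)] then Posz 1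
  else Negz 0.

Definition swap {n} (s : schedule n) (S : pred (job n)) : schedule n :=
  fun j => if S j then ~~ s j else s j.

Definition swap3 {n} (s : schedule n) (i : 'I_n) : schedule n :=
  swap s (fun j => (j == ja i) || (j == jb i) || (j == jc i)).

Definition improves (n pl : nat) (s s' : schedule n) : Prop :=
  makespan pl s' < makespan pl s.

From mathcomp Require Import all_boot all_algebra.
From mathcomp Require Import zify.
Set Implicit Arguments. Unset Strict Implicit. Unset Printing Implicit Defensive.

(* Since [p(a_i) = p(b_i) + p(c_i) + 2^(n+i)], the 3-swap moves exactly
   [2^(n+i)] of load from machine 1 to machine 2.  With the long job on
   machine 1 and [p_l] larger than all the other jobs together plus that
   amount, machine 1 carries the makespan before the swap, and after the swap
   both machines are strictly below its old load. *)

Section Loads.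

Variables (n pl : nat) (s : schedule n).

Lemma load1_add_load2 : load1 pl s + load2 pl s = \sum_(j : job n) ptime pl j.
Proof. by rewrite [RHS](bigID s). Qed.

Lemma ptime_le_load1 (j : job n) : onM1 s j -> ptime pl j <= load1 pl s.
Proof. by move=> s_j; rewrite /load1 (bigD1 j) //= leq_addr. Qed.

Lemma load1_swap (S : pred (job n)) :
  load1 pl (swap s S) + \sum_(j | S j && s j) ptime pl j =
  load1 pl s + \sum_(j | S j && ~~ s j) ptime pl j.
Proof.
rewrite /load1 /onM1 (big_mkcond (swap s S)) (big_mkcond s).
rewrite (big_mkcond (fun j => S j && s j)) (big_mkcond (fun j => S j && ~~ s j)).
rewrite -!big_split; apply: eq_bigr => j _.
by rewrite /swap; case: (S j); case: (s j); rewrite /= ?addn0.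
Qed.

End Loads.

(* Only the long job's time depends on [pl], so [ptime 0] sums the short jobs. *)
Lemma sum_ptime n pl : \sum_(j : job n) ptime pl j = \sum_(j : job n) ptime 0 j + pl.
Proof.
rewrite (bigD1 jl) // [in RHS](bigD1 jl) //= add0n addnC; congr (_ + _).
by apply: eq_bigr => -[[[j|j]|j]|[]].
Qed.

Lemma ptime_ja n pl (i : 'I_n) :
  ptime pl (ja i) = ptime pl (jb i) + ptime pl (jc i) + 2 ^ (n + i).
Proof.
rewrite /= !addnS addn0 !subn1 /= !expnS; lia.
Qed.

Section Swap3.

Variables (n : nat) (s : schedule n) (i : 'I_n).

Lemma omega_eq0 :
  omega s i = 0 -> [/\ s (ja i), ~~ s (jb i) & ~~ s (jc i)].
Proof.
by rewrite /omega /onM1 /onM2; case: (s (ja i)); case: (s (jb i)); case: (s (jc i)).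
Qed.

Lemma swap3_ja : swap3 s i (ja i) = ~~ s (ja i).
Proof. by rewrite /swap3 /swap eqxx. Qed.

Lemma swap3_jb : swap3 s i (jb i) = ~~ s (jb i).
Proof. by rewrite /swap3 /swap eqxx orbT. Qed.

Lemma swap3_jc : swap3 s i (jc i) = ~~ s (jc i).
Proof. by rewrite /swap3 /swap eqxx orbT. Qed.

Hypothesis omega_s : omega s i = 0.

Lemma omega_swap3 : omega (swap3 s i) i = 1.
Proof.
have [sa sb sc] := omega_eq0 omega_s.
by rewrite /omega /onM1 /onM2 swap3_ja swap3_jb swap3_jc sa sb sc.
Qed.

Lemma load1_swap3 (pl : nat) :
  load1 pl (swap3 s i) + ptime pl (ja i) =
  load1 pl s + ptime pl (jb i) + ptime pl (jc i).
Proof.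
have [sa /negbTE sb /negbTE sc] := omega_eq0 omega_s.
pose S j := (j == ja i) || (j == jb i) || (j == jc i).
have on1 : \sum_(j | S j && s j) ptime pl j = ptime pl (ja i).
  apply: big_pred1 => j; rewrite /S /=.
  have [->|_] := eqVneq j (ja i); first by rewrite sa.
  have [->|_] := eqVneq j (jb i); first by rewrite sb andbF.
  by have [->|] := eqVneq j (jc i); rewrite ?sc ?andbF.
have on2 : \sum_(j | S j && ~~ s j) ptime pl j = ptime pl (jb i) + ptime pl (jc i).
  rewrite (bigD1 (jb i)) /S ?eqxx ?orbT ?sb //; congr (_ + _).
  apply: (big_pred1 (jc i)) => j /=.
  have [->|_] := eqVneq j (ja i); first by rewrite sa andbF.
  have [->|_] := eqVneq j (jb i); first by rewrite andbF.
  by have [->|] := eqVneq j (jc i); rewrite ?sc ?andbF.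
by have := load1_swap pl s S; rewrite on1 on2 addnA.
Qed.

End Swap3.

Theorem lemma7 (n : nat) (hn : 0 < n) :
  exists P : nat, forall pl : nat, P <= pl ->
  forall s : schedule n,
    omega s (Ordinal hn) = Posz 0 -> onM1 s jl ->
    improves pl s (swap3 s (Ordinal hn)) /\
    omega (swap3 s (Ordinal hn)) (Ordinal hn) = Posz 1.
Proof.
set i := Ordinal hn.
exists (\sum_(j : job n) ptime 0 j + 2 ^ n).+1 => pl large_pl s omega_s l_on1.
split; last exact: omega_swap3.
have moved := load1_swap3 omega_s pl.
have gap := ptime_ja pl i; rewrite addn0 in gap.
have total := load1_add_load2 pl s.
have total' := load1_add_load2 pl (swap3 s i).
have l_le : pl <= load1 pl s := ptime_le_load1 pl l_on1.
have gap_pos : 0 < 2 ^ n := expn_gt0 2 n.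
rewrite sum_ptime in total total'; rewrite /improves /makespan /=.
lia.
Qed.
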